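(* Let $n\ge2$, $\mathbf{q}\in\mathbb{R}^n$ and $1/n<t<1$. Then there exists a maximizer $\mathbf{p}^*$ of $\mathbf{p}\cdot\mathbf{q}$ over $P(t)$ with $\mathbf{p}^*\cdot\mathbf{p}^*=t$. Consequently, $\max_{\mathbf{p}\in P(t)}\mathbf{p}\cdot\mathbf{q}=\max\{\mathbf{p}\cdot\mathbf{q}:\mathbf{p}\ge0,\ \sum_i\mathbf{p}_i=1,\ \mathbf{p}\cdot\mathbf{p}=t\}$.
   Context: $P(t)=\{\mathbf{p}\in\mathbb{R}^n:\mathbf{p}\ge0,\ \sum_i\mathbf{p}_i=1,\ \mathbf{p}\cdot\mathbf{p}\le t\}$. *)

From mathcomp Require Import all_boot all_order all_algebra.
From mathcomp Require Import reals.
Set Implicit Arguments. Unset Strict Implicit. Unset Printing Implicit Defensive.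
Import Order.TTheory GRing.Theory Num.Theory.
Local Open Scope ring_scope.

Definition dotp (R : realType) (n : nat) (p q : 'I_n -> R) : R :=
  \sum_(i < n) p i * q i.

Definition simplex (R : realType) (n : nat) (p : 'I_n -> R) : Prop :=
  (forall i, 0 <= p i) /\ \sum_(i < n) p i = 1.

Definition Pset (R : realType) (n : nat) (t : R) (p : 'I_n -> R) : Prop :=
  simplex p /\ dotp p p <= t.

From mathcomp Require Import all_boot all_order all_algebra.
From mathcomp Require Import reals topology normedtype.
From mathcomp Require Import ring lra.
Set Implicit Arguments. Unset Strict Implicit. Unset Printing Implicit Defensive.
Import Order.TTheory GRing.Theory Num.Theory.
Import numFieldNormedType.Exports.
Local Open Scope ring_scope.

(* A feasible r with r.r = t is optimal as soon as it satisfies the KKT conditions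
   for the constraints sum p = 1 and p.p <= t: if s q_i - c <= Z r_i for all i,
   with equality on the support of r, then s p.q - c <= Z p.r <= Z r.r = s r.q - c.
   Let m be the number of indices where q is maximal.  If t >= 1/m, a mixture of
   the uniform distribution on the argmax set with a point mass in it reaches
   r.r = t without leaving that set, and the conditions hold with Z = 0.  If
   t < 1/m, the hinge vectors max(0, 1 - s (max q - q_i)) have concentration
   (sum w^2)/(sum w)^2 equal to 1/n at s = 0 and to 1/m for s large, so by the
   intermediate value theorem one of them, normalized, has r.r = t; it satisfies
   the conditions with Z its total mass. *)

Section Simplex.
Variables (R : realType) (n : nat).
Implicit Types (p q r u v w : 'I_n -> R) (A B : {set 'I_n}).

Lemma dotp_le_sqr p r : 2 * dotp p r <= dotp p p + dotp r r.
Proof.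
rewrite -subr_ge0.
have -> : dotp p p + dotp r r - 2 * dotp p r = \sum_i (p i - r i) ^+ 2.
  by rewrite /dotp mulr_sumr -big_split -sumrB; apply: eq_bigr => i _ /=; ring.
by apply: sumr_ge0 => i _; exact: sqr_ge0.
Qed.

Lemma dotp_affine p q s c :
  simplex p -> dotp p (fun i => s * q i - c) = s * dotp p q - c.
Proof.
move=> [_ p1]; rewrite /dotp -[c in RHS]mul1r -p1 mulr_suml mulr_sumr -sumrB.
by apply: eq_bigr => i _ /=; ring.
Qed.

Lemma dotp_lincomb a b u v :
  dotp (fun i => a * u i + b * v i) (fun i => a * u i + b * v i) =
  a ^+ 2 * dotp u u + 2 * a * b * dotp u v + b ^+ 2 * dotp v v.
Proof. by rewrite /dotp !mulr_sumr -!big_split; apply: eq_bigr => i _ /=; ring. Qed.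

Lemma Pset_maximizer_of_KKT q r s c Z :
  0 < s -> 0 <= Z -> simplex r ->
  (forall i, s * q i - c <= Z * r i) ->
  (forall i, 0 < r i -> s * q i - c = Z * r i) ->
  forall p, Pset (dotp r r) p -> dotp p q <= dotp r q.
Proof.
move=> s_gt0 Z_ge0 r_simplex a_le a_eq p [p_simplex pp_le].
have r_a : dotp r (fun i => s * q i - c) = Z * dotp r r.
  rewrite /dotp mulr_sumr; apply: eq_bigr => i _.
  have [/a_eq -> | r_le0] := ltP 0 (r i); first by rewrite mulrCA.
  have -> : r i = 0 by apply/eqP; rewrite eq_le r_le0 r_simplex.1.
  by rewrite !(mul0r, mulr0).
have p_a : dotp p (fun i => s * q i - c) <= Z * dotp p r.
  rewrite /dotp mulr_sumr; apply: ler_sum => i _.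
  by rewrite mulrCA; apply: ler_wpM2l; [exact: p_simplex.1 | exact: a_le].
rewrite -(ler_pM2l s_gt0) -(lerD2r (- c)) -!dotp_affine // r_a.
apply: le_trans p_a (ler_wpM2l Z_ge0 _).
have := dotp_le_sqr p r; lra.
Qed.

Definition normalize w i := w i / \sum_k w k.

Definition concentration w := dotp w w / (\sum_i w i) ^+ 2.

Lemma eq_concentration w w' : w =1 w' -> concentration w = concentration w'.
Proof.
move=> ww'; rewrite /concentration /dotp.
by congr (_ / _ ^+ 2); apply: eq_bigr => i _; rewrite ww'.
Qed.

Lemma simplex_normalize w :
  (forall i, 0 <= w i) -> \sum_i w i != 0 -> simplex (normalize w).
Proof.
move=> w_ge0 sum_neq0; split => [i|]; first by rewrite divr_ge0 ?sumr_ge0.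
by rewrite -mulr_suml divff.
Qed.

Lemma dotp_normalize w :
  dotp (normalize w) (normalize w) = concentration w.
Proof.
rewrite /dotp /concentration mulr_suml; apply: eq_bigr => i _.
by rewrite /normalize expr2 invfM; ring.
Qed.

Definition ind A i : R := (i \in A)%:R.

Lemma sum_ind A : \sum_i ind A i = #|A|%:R.
Proof.
rewrite -sum1_card natr_sum [RHS]big_mkcond; apply: eq_bigr => i _.
by rewrite /ind; case: (i \in A).
Qed.

Lemma dotp_ind A B : dotp (ind A) (ind B) = #|A :&: B|%:R.
Proof.
rewrite -sum_ind; apply: eq_bigr => i _.
by rewrite /ind -natrM mulnb inE.
Qed.

Lemma concentration_ind A : concentration (ind A) = #|A|%:R^-1.
Proof.
rewrite /concentration dotp_ind setIid sum_ind.
have [-> | A_neq0] := eqVneq (#|A|%:R : R) 0; first by rewrite invr0 mul0r.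
by field.
Qed.

Lemma exists_simplex_on_with_sqnorm A j t :
  j \in A -> (1 < #|A|)%N -> #|A|%:R^-1 <= t <= 1 ->
  exists r, [/\ simplex r, dotp r r = t & forall i, 0 < r i -> i \in A].
Proof.
move=> jA A_gt1 /andP [t_ge t_le1].
set m : R := #|A|%:R in t_ge *.
have m_gt1 : 1 < m by rewrite ltr1n.
have im : 0 < m^-1 < 1 by rewrite invr_gt0 invf_lt1 //; lra.
set x := (t - m^-1) / (1 - m^-1).
have x_ge0 : 0 <= x by apply: divr_ge0; lra.
have x_le1 : x <= 1 by rewrite ler_pdivrMr; lra.
set a := Num.sqrt x.
have a_ge0 : 0 <= a := sqrtr_ge0 x.
have a_le1 : a <= 1 by rewrite -sqrtr1 ler_wsqrtr.
exists (fun i => (1 - a) / m * ind A i + a * ind [set j] i); split.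
- split=> [i|]; first by rewrite addr_ge0 ?mulr_ge0 ?invr_ge0 ?ler0n //; lra.
  rewrite big_split /= -!mulr_sumr !sum_ind cards1; field; lra.
- rewrite dotp_lincomb !dotp_ind (setIid A) (setIid [set j]).
  have -> : A :&: [set j] = [set j] by apply/setIidPr; rewrite sub1set.
  rewrite cards1 -/m.
  have -> : ((1 - a) / m) ^+ 2 * m + 2 * ((1 - a) / m) * a * 1%:R + a ^+ 2 * 1%:R
            = (1 - a ^+ 2) / m + a ^+ 2 by field; lra.
  by rewrite sqr_sqrtr // /x; field; lra.
- move=> i; apply: contraTT => iNA.
  have iNj : i \notin [set j] by rewrite inE; apply: contraNneq iNA => ->.
  by rewrite /ind (negbTE iNA) (negbTE iNj) !mulr0 addr0 ltxx.
Qed.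

Lemma Pset_maximizer_flat q j t :
  (forall i, q i <= q j) -> #|[set i | q i == q j]|%:R^-1 <= t < 1 ->
  exists r, [/\ simplex r, dotp r r = t &
                forall p, Pset t p -> dotp p q <= dotp r q].
Proof.
set A := [set i | q i == q j] => q_le /andP [t_ge t_lt1].
have jA : j \in A by rewrite inE.
have A_gt1 : (1 < #|A|)%N.
  have A_gt0 : (0 < #|A|)%N by apply/card_gt0P; exists j.
  have A_neq1 : #|A| != 1%N by apply: contraTneq t_ge => ->; rewrite invr1 -ltNge.
  by rewrite ltn_neqAle eq_sym A_neq1.
have [|r [r_simplex <- r_on]] := exists_simplex_on_with_sqnorm (t := t) jA A_gt1.
  by rewrite t_ge; lra.
exists r; split => //.
apply: (Pset_maximizer_of_KKT (s := 1) (c := q j) (Z := 0)) => // i.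
  by rewrite mul1r mul0r subr_le0.
by move/r_on; rewrite inE => /eqP ->; rewrite mul1r mul0r subrr.
Qed.

Section Hinge.
Variables (d : 'I_n -> R) (j : 'I_n).
Hypotheses (d_ge0 : forall i, 0 <= d i) (d_j : d j = 0).

Definition hinge s i := Num.max 0 (1 - s * d i).

Lemma hinge_ge0 s i : 0 <= hinge s i.
Proof. by rewrite le_max lexx. Qed.

Lemma sum_hinge_ge1 s : 1 <= \sum_i hinge s i.
Proof.
rewrite (bigD1 j) //= {1}/hinge d_j mulr0 subr0 (max_idPr ler01) lerDl.
by apply: sumr_ge0 => i _; exact: hinge_ge0.
Qed.

Lemma hinge0 : hinge 0 =1 ind setT.
Proof. by move=> i; rewrite /hinge /ind inE mul0r subr0 (max_idPr ler01). Qed.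

(* Since 0^-1 = 0, the sum bounds (d i)^-1 for every d i > 0. *)
Lemma hinge_flat : hinge (\sum_i (d i)^-1) =1 ind [set i | d i == 0].
Proof.
move=> i; rewrite /hinge /ind inE.
have [-> | d_neq0] := eqVneq (d i) 0; first by rewrite mulr0 subr0 (max_idPr ler01).
have d_gt0 : 0 < d i by rewrite lt_neqAle eq_sym d_neq0 d_ge0.
apply/max_idPl; rewrite subr_le0 -(mulVf d_neq0) ler_pM2r // (bigD1 i) //= lerDl.
by apply: sumr_ge0 => k _; rewrite invr_ge0.
Qed.

Lemma continuous_concentration_hinge : continuous (fun s => concentration (hinge s)).
Proof.
have hinge_cont i : continuous (fun s => hinge s i).
  move=> s; have cst (c : R) : {for s, continuous (fun _ : R => (c : R^o))} by exact: cvg_cst.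
  have line : {for s, continuous (fun x : R => (1 - x * d i : R^o))}.
    by apply: continuousB (cst 1) _; apply: continuousM (cst _); exact: cvg_id.
  exact: continuous_max (cst 0) line.
have sum_cont (F : 'I_n -> R -> R) : (forall i, continuous (F i)) ->
    continuous (fun s => \sum_i F i s).
  by move=> F_cont; apply: (continuous_big add_continuous) => i _; exact: F_cont.
move=> s.
have num_cont : {for s, continuous (fun x => dotp (hinge x) (hinge x))}.
  by apply: sum_cont => i x; exact: continuousM (hinge_cont i x) (hinge_cont i x).
have den_cont : {for s, continuous (fun x => (\sum_i hinge x i) ^+ 2)}.
  by apply: continuousM; exact: sum_cont.
have den_neq0 : (\sum_i hinge s i) ^+ 2 != 0.
  by rewrite expf_neq0 // gt_eqF // (lt_le_trans ltr01 (sum_hinge_ge1 s)).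
have inv_cont := continuousV (s := fun x => (\sum_i hinge x i) ^+ 2) den_neq0 den_cont.
exact: continuousM num_cont inv_cont.
Qed.

Lemma exists_hinge_concentration t :
  n%:R^-1 < t < #|[set i | d i == 0]|%:R^-1 ->
  exists2 s, 0 < s & concentration (hinge s) = t.
Proof.
move=> /andP [t_gt t_lt].
set S := \sum_i (d i)^-1.
have S_ge0 : 0 <= S by apply: sumr_ge0 => i _; rewrite invr_ge0.
have conc0 : concentration (hinge 0) = n%:R^-1.
  by rewrite (eq_concentration hinge0) concentration_ind cardsT card_ord.
have concS : concentration (hinge S) = #|[set i | d i == 0]|%:R^-1.
  by rewrite (eq_concentration hinge_flat) concentration_ind.
have [s s_in conc_s] : exists2 s, s \in `[0, S] & concentration (hinge s) = t.
  apply: IVT S_ge0 _ _; first exact/continuous_subspaceT/continuous_concentration_hinge.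
  by rewrite conc0 concS ge_min le_max (ltW t_gt) (ltW t_lt) orbT.
exists s => //; move: s_in; rewrite in_itv /= => /andP [s_ge0 _].
rewrite lt_neqAle s_ge0 andbT; apply: contraTneq t_gt => s0.
by rewrite -conc_s -s0 conc0 ltxx.
Qed.

End Hinge.

Lemma Pset_maximizer_spread q j t :
  (forall i, q i <= q j) -> n%:R^-1 < t < #|[set i | q i == q j]|%:R^-1 ->
  exists r, [/\ simplex r, dotp r r = t &
                forall p, Pset t p -> dotp p q <= dotp r q].
Proof.
move=> q_le t_bounds.
pose d i := q j - q i.
have d_ge0 i : 0 <= d i by rewrite subr_ge0.
have d_j : d j = 0 by rewrite /d subrr.
have flat_d : [set i | d i == 0] = [set i | q i == q j].
  by apply/setP => i; rewrite !inE subr_eq0 eq_sym.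
rewrite -flat_d in t_bounds.
have [s s_gt0 conc_s] := exists_hinge_concentration d_ge0 d_j t_bounds.
set w := hinge d s.
have sum_w_gt0 : 0 < \sum_i w i := lt_le_trans ltr01 (sum_hinge_ge1 d_j s).
have r_simplex : simplex (normalize w).
  by apply: simplex_normalize; [exact: hinge_ge0 | rewrite gt_eqF].
have r_t : dotp (normalize w) (normalize w) = t by rewrite dotp_normalize.
exists (normalize w); split => //; rewrite -r_t.
have slack i : s * q i - (s * q j - 1) = 1 - s * d i by rewrite /d; ring.
have unscale i : (\sum_k w k) * normalize w i = w i by rewrite mulrC divfK // gt_eqF.
apply: (Pset_maximizer_of_KKT (s := s) (c := s * q j - 1) (Z := \sum_k w k)) => //.
- exact: ltW.
- by move=> i; rewrite slack unscale le_max lexx orbT.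
- move=> i; rewrite slack unscale /normalize pmulr_lgt0 ?invr_gt0 // /w /hinge lt_max ltxx /=.
  by move=> pos; apply/esym/max_idPr/ltW.
Qed.

End Simplex.

Theorem lemma6 (R : realType) (n : nat) (q : 'I_n -> R) (t : R) :
  (2 <= n)%N -> n%:R^-1 < t -> t < 1 ->
  exists pstar : 'I_n -> R,
    [/\ Pset t pstar,
        dotp pstar pstar = t,
        (forall p, Pset t p -> dotp p q <= dotp pstar q) &
        (* consequently: pstar also maximizes over the slice p.p = t,
           so both maxima exist and are equal to pstar . q *)
        (forall p, simplex p -> dotp p p = t -> dotp p q <= dotp pstar q)].
Proof.
move=> n_ge2 t_gt t_lt1.
have [j _ q_max] := arg_maxP q (i0 := Ordinal (ltnW n_ge2)) (P := xpredT) isT.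
have q_le i : q i <= q j := q_max i isT.
suff [r [r_simplex r_t r_max]] : exists r, [/\ simplex r, dotp r r = t &
    forall p, Pset t p -> dotp p q <= dotp r q].
  exists r; split => // [|p p_simplex p_t]; first by split; rewrite ?r_t.
  by apply: r_max; split; rewrite ?p_t.
have [t_lt | t_ge] := ltP t #|[set i | q i == q j]|%:R^-1.
- by apply: Pset_maximizer_spread q_le _; rewrite t_gt.
- by apply: Pset_maximizer_flat q_le _; rewrite t_ge.
Qed.
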